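(* Fix a number $x$ (real or complex) and let $(u_n)_{n\ge0}$ satisfy $(n+\tfrac12)u_{n+1}=2xn\,u_n-(n-\tfrac12)u_{n-1}$ for all $n\ge1$. Define $\hat u_n=2x\,u_n-u_{n+1}-u_{n-1}$ for $n\ge1$. Then $(n+\tfrac32)\hat u_{n+1}=2xn\,\hat u_n-(n-\tfrac32)\hat u_{n-1}$ for all $n\ge2$. *)

From mathcomp Require Import all_boot all_order all_algebra.
Set Implicit Arguments. Unset Strict Implicit. Unset Printing Implicit Defensive.
Import Order.TTheory GRing.Theory Num.Theory.
Local Open Scope ring_scope.

(* hat u_n = 2 x u_n - u_{n+1} - u_{n-1}  (meaningful for n >= 1) *)
Definition uhat (R : ringType) (x : R) (u : nat -> R) (n : nat) : R :=
  2 * x * u n - u n.+1 - u n.-1.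

From mathcomp Require Import all_boot all_order all_algebra.
From mathcomp Require Import ring.
Import Order.TTheory GRing.Theory Num.Theory.
Local Open Scope ring_scope.

(* The hat transform intertwines the recurrence defects: the defect of hat u
   with shift s + 1 is the hat transform of the defect of u with shift s, an
   identity valid in any commutative ring.  Since 3/2 = 1/2 + 1, hat u inherits
   the recurrence at n from the vanishing defects of u at n - 1, n, n + 1. *)

Definition rec_defect {R : pzRingType} (s x : R) (v : nat -> R) (n : nat) : R :=
  (n%:R + s) * v n.+1 - (2 * x * n%:R * v n - (n%:R - s) * v n.-1).

Lemma rec_defect_uhat {R : comNzRingType} (s x : R) (u : nat -> R) (n : nat) :
  (2 <= n)%N ->
  rec_defect (s + 1) x (uhat x u) n = uhat x (rec_defect s x u) n.
Proof.
case: n => [|[|m]] // _.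
by rewrite /rec_defect /uhat /=; ring.
Qed.

Lemma uhat_eq0 {R : nzRingType} (x : R) (v : nat -> R) (n : nat) :
  v n.-1 = 0 -> v n = 0 -> v n.+1 = 0 -> uhat x v n = 0.
Proof. by move=> vNn vn vSn; rewrite /uhat vNn vn vSn mulr0 !subr0. Qed.

Theorem theorem2 (R : numFieldType) (x : R) (u : nat -> R) :
  (forall n : nat, (1 <= n)%N ->
     (n%:R + 2^-1) * u n.+1 = 2 * x * n%:R * u n - (n%:R - 2^-1) * u n.-1) ->
  forall n : nat, (2 <= n)%N ->
    (n%:R + 3 / 2) * uhat x u n.+1
    = 2 * x * n%:R * uhat x u n - (n%:R - 3 / 2) * uhat x u n.-1.
Proof.
move=> rec_u n n_ge2.
have defect_u0 k : (1 <= k)%N -> rec_defect 2^-1 x u k = 0.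
  by move=> k_ge1; rewrite /rec_defect rec_u // subrr.
have three_halves : 3 / 2 = 2^-1 + 1 :> R by field.
apply/eqP; rewrite -subr_eq0 three_halves.
rewrite -/(rec_defect _ x (uhat x u) n) rec_defect_uhat //.
by apply/eqP/uhat_eq0; apply: defect_u0; case: n n_ge2 => [|[|m]].
Qed.
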